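(* Let $n\ge3$ be an integer, $a\ge1$ real, and $x_0\in(0,\pi)$ with $S_{n,a}(x_0)=S_{n-2,a}(x_0)$. Then $a=1$ and $\phi_n(x_0)=0$.
   Context: For a real number $a$ and integers $0\le m$, $\binom{m+a}{m}=\frac{(a+1)(a+2)\cdots(a+m)}{m!}$ (equal to $1$ when $m=0$). For an integer $n\ge1$, $S_{n,a}(x)=\sum_{j=1}^n\binom{n+a-j}{n-j}\sin(jx)$, and $\phi_n(x)=2\sum_{j=1}^{n-1}\sin(jx)+\sin(nx)$. *)

From Stdlib Require Import Reals Arith Factorial.
Open Scope R_scope.

(* gbinom a m = binom(m+a, m) = (a+1)(a+2)...(a+m)/m!  (= 1 when m = 0) *)
Fixpoint rising_prod (a : R) (m : nat) : R :=
  match m with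
  | O => 1
  | S k => rising_prod a k * (a + INR (S k))
  end.

Definition gbinom (a : R) (m : nat) : R := rising_prod a m / INR (fact m).

Fixpoint sum1 (n : nat) (f : nat -> R) : R :=
  match n with
  | O => 0
  | S k => sum1 k f + f (S k)
  end.

Definition S_na (n : nat) (a x : R) : R :=
  sum1 n (fun j => gbinom a (n - j)%nat * sin (INR j * x)).

Definition phi (n : nat) (x : R) : R :=
  2 * sum1 (n - 1)%nat (fun j => sin (INR j * x)) + sin (INR n * x).

(* Two applications of Pascal's rule [C_a(m+1) = C_a(m) + C_{a-1}(m+1)] rewrite
   S_{n,a}(x) as a convolution of the coefficients C_{a-2}, which are
   nonnegative for a >= 1, with the iterated partial sums of sin(jx).  The
   difference S_{n,a} - S_{n-2,a} then becomes
   sum_{k=1}^n C_{a-2}(n-k) (D_k(x) + D_{k-1}(x)) with D_k(x) = sum_{j<=k} sin(jx),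
   and 2 sin(x/2) (D_k + D_{k-1}) = 2 cos(x/2) (1 - cos(kx)) >= 0 on (0, pi).
   All terms therefore vanish: the term k = 1 is C_{a-2}(n-1) sin x, which is
   positive unless a = 1, and the term k = n is phi_n(x). *)
From Stdlib Require Import Reals Lra Lia Arith Factorial.
Open Scope R_scope.

Lemma sum1_S n f : sum1 (S n) f = sum1 n f + f (S n).
Proof. reflexivity. Qed.

Lemma sum1_ext n f g :
  (forall j, (1 <= j <= n)%nat -> f j = g j) -> sum1 n f = sum1 n g.
Proof.
  induction n as [|n IH]; intros Hfg; [reflexivity|].
  rewrite !sum1_S, IH, Hfg; [reflexivity|lia|intros; apply Hfg; lia].
Qed.

Lemma sum1_plus n f g : sum1 n (fun j => f j + g j) = sum1 n f + sum1 n g.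
Proof. induction n as [|n IH]; simpl; [ring|rewrite IH; ring]. Qed.

Lemma sum1_minus n f g : sum1 n (fun j => f j - g j) = sum1 n f - sum1 n g.
Proof. induction n as [|n IH]; simpl; [ring|rewrite IH; ring]. Qed.

Lemma sum1_shift n g : sum1 (S n) g = g 1%nat + sum1 n (fun i => g (S i)).
Proof.
  induction n as [|n IH]; [simpl; ring|].
  rewrite sum1_S, IH, sum1_S; ring.
Qed.

Lemma sum1_ge0 n g : (forall j, 0 <= g j) -> 0 <= sum1 n g.
Proof.
  intros Hg; induction n as [|n IH]; simpl; [lra|].
  specialize (Hg (S n)); lra.
Qed.

Lemma sum1_ge_first_last n g :
  (forall j, 0 <= g j) -> g 1%nat + g (S (S n)) <= sum1 (S (S n)) g.
Proof.
  intros Hg.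
  rewrite sum1_S, sum1_shift.
  pose proof (sum1_ge0 n (fun i => g (S i)) (fun i => Hg (S i))); lra.
Qed.

Lemma sum1_convolution_partial_sums (b c f : nat -> R) :
  c 0%nat = b 0%nat -> (forall m, c (S m) = c m + b (S m)) ->
  forall n, sum1 n (fun j => c (n - j)%nat * f j)
          = sum1 n (fun i => b (n - i)%nat * sum1 i f).
Proof.
  intros Hc0 HcS n; induction n as [|n IH]; [reflexivity|].
  set (X := sum1 (S n) (fun j => b (S n - j)%nat * f j)).
  assert (Hl : sum1 (S n) (fun j => c (S n - j)%nat * f j)
               = sum1 n (fun j => c (n - j)%nat * f j) + X).
  { unfold X; rewrite !sum1_S, !Nat.sub_diag, Hc0.
    rewrite (sum1_ext n _ (fun j => c (n - j)%nat * f j + b (S n - j)%nat * f j)).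
    - rewrite sum1_plus; ring.
    - intros j Hj; replace (S n - j)%nat with (S (n - j)) by lia; rewrite HcS; ring. }
  assert (Hr : sum1 (S n) (fun i => b (S n - i)%nat * sum1 i f)
               = sum1 n (fun i => b (n - i)%nat * sum1 i f) + X).
  { unfold X; rewrite !sum1_shift; simpl Nat.sub.
    replace (n - 0)%nat with n by lia.
    rewrite (sum1_ext n _ (fun i => b (n - i)%nat * sum1 i f + b (n - i)%nat * f (S i)))
      by (intros; rewrite sum1_S; ring).
    rewrite sum1_plus; simpl sum1 at 1; ring. }
  rewrite Hl, Hr, IH; reflexivity.
Qed.

Lemma rising_prod_pred_S c m : rising_prod (c - 1) (S m) = c * rising_prod c m.
Proof.
  induction m as [|m IH]; [simpl; ring|].
  change (rising_prod (c - 1) (S m) * (c - 1 + INR (S (S m)))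
          = c * (rising_prod c m * (c + INR (S m)))).
  rewrite IH, (S_INR (S m)); ring.
Qed.

Lemma rising_prod_ge0 c k : -1 <= c -> 0 <= rising_prod c k.
Proof.
  intros Hc; induction k as [|k IH]; simpl rising_prod; [lra|].
  pose proof (le_INR 1 (S k) ltac:(lia)); simpl INR in *.
  apply Rmult_le_pos; lra.
Qed.

Lemma rising_prod_gt0 c k : -1 < c -> 0 < rising_prod c k.
Proof.
  intros Hc; induction k as [|k IH]; simpl rising_prod; [lra|].
  pose proof (le_INR 1 (S k) ltac:(lia)); simpl INR in *.
  apply Rmult_lt_0_compat; lra.
Qed.

Lemma gbinom_0 c : gbinom c 0 = 1.
Proof. unfold gbinom; simpl; field. Qed.

Lemma gbinom_pascal c m : gbinom c (S m) = gbinom c m + gbinom (c - 1) (S m).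
Proof.
  unfold gbinom; rewrite rising_prod_pred_S.
  change (rising_prod c (S m)) with (rising_prod c m * (c + INR (S m))).
  change (fact (S m)) with (S m * fact m)%nat; rewrite mult_INR.
  assert (INR (fact m) <> 0) by (apply not_0_INR, fact_neq_0).
  assert (INR (S m) <> 0) by (apply not_0_INR; lia).
  field; auto.
Qed.

Lemma INR_fact_inv_gt0 m : 0 < / INR (fact m).
Proof. apply Rinv_0_lt_compat, lt_0_INR, lt_O_fact. Qed.

Lemma gbinom_ge0 c m : -1 <= c -> 0 <= gbinom c m.
Proof.
  intros Hc; unfold gbinom.
  apply Rmult_le_pos; [apply rising_prod_ge0, Hc | left; apply INR_fact_inv_gt0].
Qed.

Lemma gbinom_pred_S_gt0 c m : 0 < c -> 0 < gbinom (c - 1) (S m).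
Proof.
  intros Hc; unfold gbinom; rewrite rising_prod_pred_S.
  apply Rmult_lt_0_compat; [|apply INR_fact_inv_gt0].
  apply Rmult_lt_0_compat; [lra | apply rising_prod_gt0; lra].
Qed.

Definition sin_sum (x : R) (k : nat) : R := sum1 k (fun j => sin (INR j * x)).

Definition cum_sin_sum (x : R) (k : nat) : R := sum1 k (sin_sum x).

Lemma sin_sum_closed x k :
  2 * sin (x / 2) * sin_sum x k = cos (x / 2) - cos ((INR k + / 2) * x).
Proof.
  induction k as [|k IH].
  - unfold sin_sum; simpl; replace ((0 + / 2) * x) with (x / 2) by field; ring.
  - unfold sin_sum in *; rewrite sum1_S, Rmult_plus_distr_l, IH, S_INR.
    replace ((INR k + / 2) * x) with ((INR k + 1) * x - x / 2) by field.
    replace ((INR k + 1 + / 2) * x) with ((INR k + 1) * x + x / 2) by field.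
    rewrite cos_minus, cos_plus; ring.
Qed.

Lemma sin_sum_pair_ge0 x k : 0 < x < PI -> 0 <= sin_sum x k + sin_sum x (k - 1).
Proof.
  intros [Hx0 HxPI].
  destruct k as [|k]; [unfold sin_sum; simpl; lra|].
  replace (S k - 1)%nat with k by lia.
  assert (Hs : 0 < sin (x / 2)) by (apply sin_gt_0; lra).
  assert (Hc : 0 < cos (x / 2)) by (apply cos_gt_0; lra).
  assert (E : 2 * sin (x / 2) * (sin_sum x (S k) + sin_sum x k)
              = 2 * cos (x / 2) * (1 - cos ((INR k + 1) * x))).
  { rewrite Rmult_plus_distr_l, !sin_sum_closed, S_INR.
    replace ((INR k + / 2) * x) with ((INR k + 1) * x - x / 2) by field.
    replace ((INR k + 1 + / 2) * x) with ((INR k + 1) * x + x / 2) by field.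
    rewrite cos_minus, cos_plus; ring. }
  pose proof (COS_bound ((INR k + 1) * x)) as [_ Hcos].
  assert (0 <= 2 * sin (x / 2) * (sin_sum x (S k) + sin_sum x k))
    by (rewrite E; apply Rmult_le_pos; lra).
  nra.
Qed.

Lemma phi_sin_sum n x : phi (S n) x = sin_sum x (S n) + sin_sum x n.
Proof.
  unfold phi, sin_sum; replace (S n - 1)%nat with n by lia.
  rewrite sum1_S; ring.
Qed.

Lemma S_na_cum_sin_sum n a x :
  S_na n a x = sum1 n (fun k => gbinom (a - 2) (n - k)%nat * cum_sin_sum x k).
Proof.
  unfold S_na, cum_sin_sum.
  replace (a - 2) with (a - 1 - 1) by ring.
  rewrite (sum1_convolution_partial_sums (gbinom (a - 1)) (gbinom a));
    [| now rewrite !gbinom_0 | intros; apply gbinom_pascal].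
  apply sum1_convolution_partial_sums;
    [now rewrite !gbinom_0 | intros; apply gbinom_pascal].
Qed.

(* [cum_sin_sum x k - cum_sin_sum x (k - 2)] telescopes to
   [sin_sum x k + sin_sum x (k - 1)], also for [k = 1, 2]. *)
Lemma S_na_SS_minus n a x :
  S_na (S (S n)) a x - S_na n a x
  = sum1 (S (S n)) (fun k => gbinom (a - 2) (S (S n) - k)%nat
                              * (sin_sum x k + sin_sum x (k - 1))).
Proof.
  rewrite !S_na_cum_sin_sum, !(sum1_shift (S n)), !(sum1_shift n); simpl Nat.sub.
  replace (n - 0)%nat with n by lia.
  replace (sin_sum x 0) with 0 by reflexivity.
  replace (cum_sin_sum x 1) with (sin_sum x 1) by (unfold cum_sin_sum; simpl; ring).
  replace (cum_sin_sum x 2) with (sin_sum x 2 + sin_sum x 1)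
    by (unfold cum_sin_sum; simpl; ring).
  rewrite (sum1_ext n
             (fun i => gbinom (a - 2) (n - i) * (sin_sum x (S (S i)) + sin_sum x (S i)))
             (fun i => gbinom (a - 2) (n - i) * cum_sin_sum x (S (S i))
                       - gbinom (a - 2) (n - i) * cum_sin_sum x i))
    by (intros; unfold cum_sin_sum; rewrite !sum1_S; ring).
  rewrite sum1_minus; ring.
Qed.

Theorem mainTheorem5 (n : nat) (a x0 : R) :
  (3 <= n)%nat -> 1 <= a -> 0 < x0 -> x0 < PI ->
  S_na n a x0 = S_na (n - 2)%nat a x0 ->
  a = 1 /\ phi n x0 = 0.
Proof.
  intros Hn Ha Hx0 HxPI HS.
  destruct n as [|[|[|p]]]; try lia.
  replace (S (S (S p)) - 2)%nat with (S p) in HS by lia.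
  assert (Hdiff := S_na_SS_minus (S p) a x0); rewrite HS, Rminus_diag in Hdiff.
  assert (Hb : forall m, 0 <= gbinom (a - 2) m) by (intros; apply gbinom_ge0; lra).
  assert (Hbound := sum1_ge_first_last (S p)
    (fun k => gbinom (a - 2) (S (S (S p)) - k) * (sin_sum x0 k + sin_sum x0 (k - 1)))
    (fun k => Rmult_le_pos _ _ (Hb _) (sin_sum_pair_ge0 x0 k (conj Hx0 HxPI)))).
  rewrite <- Hdiff in Hbound; cbv beta in Hbound; simpl Nat.sub in Hbound.
  rewrite Nat.sub_diag, gbinom_0, Rmult_1_l, <- (phi_sin_sum (S (S p))) in Hbound.
  replace (sin_sum x0 1 + sin_sum x0 0) with (sin x0) in Hbound
    by (unfold sin_sum; simpl; rewrite Rmult_1_l; ring).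
  assert (Hsin : 0 < sin x0) by (apply sin_gt_0; lra).
  assert (Hphi : 0 <= phi (S (S (S p))) x0)
    by (rewrite phi_sin_sum; apply (sin_sum_pair_ge0 x0 (S (S (S p)))); lra).
  assert (Hfirst : 0 <= gbinom (a - 2) (S (S p)) * sin x0)
    by (apply Rmult_le_pos; [apply Hb | lra]).
  destruct (Rle_lt_or_eq_dec 1 a Ha) as [Ha1 | <-]; [exfalso | split; [reflexivity | lra]].
  pose proof (gbinom_pred_S_gt0 (a - 1) (S p) ltac:(lra)) as Hpos.
  replace (a - 1 - 1) with (a - 2) in Hpos by ring.
  nra.
Qed.
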